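(* Let $S=(\mathbb{R}\cup\{-\infty\},\max,+,-\infty,0)$ be the max-plus semiring, let $A\in M_{n}(S)$, let $b\in S^{n}$ be a regular vector, and suppose $d:=\det_{\varepsilon}(A)\neq-\infty$. For $j\in\{1,\dots,n\}$ let $A_{[j]}$ be the matrix obtained from $A$ by replacing its $j$-th column by $b$, and $d_j:=\det_{\varepsilon}(A_{[j]})$. Then the system $AX=b$ has the maximal solution $X^{*}=(d_1-d,\,d_2-d,\,\dots,\,d_n-d)^{T}$ if and only if $(AA^{-})_{ij}\le b_i-b_j$ for all $i,j\in\{1,\dots,n\}$.
   Context: Matrix operations over $S$: $(A+B)_{ij}=\max(a_{ij},b_{ij})$, $(AC)_{ij}=\max_k(a_{ik}+c_{kj})$. The $\varepsilon$-determinant (with the identity $\varepsilon$-function) of $A\in M_n(S)$ is $\det_{\varepsilon}(A)=\max_{\sigma\in\mathcal{S}_n}\sum_{i=1}^{n}a_{i\sigma(i)}$. $A(i|j)$ denotes the submatrix obtained by deleting row $i$ and column $j$, and the $\varepsilon$-adjoint is $\mathrm{adj}_{\varepsilon}(A)_{ij}=\det_{\varepsilon}(A(j|i))$. When $\det_{\varepsilon}(A)\neq-\infty$ (a unit of $S$), the pseudo-inverse is $A^{-}=(a^{-}_{ij})$ with $a^{-}_{ij}=\mathrm{adj}_{\varepsilon}(A)_{ij}-\det_{\varepsilon}(A)$. A vector is regular if none of its entries is $-\infty$. Differences such as $d_j-d$ and $b_i-b_j$ are ordinary real subtraction (in the semifield, $d^{-1}d_j$). A solution $X^{*}$ of $AX=b$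 is maximal if $X\le X^{*}$ componentwise for every solution $X$. *)

(* Max-plus semiring S = R ∪ {-oo}, encoded as option R
   with None = -oo, over an arbitrary real field R (in particular the reals). *)
From HB Require Import structures.
From mathcomp Require Import all_boot all_order all_algebra all_fingroup.
Set Implicit Arguments. Unset Strict Implicit. Unset Printing Implicit Defensive.
Import Order.TTheory GRing.Theory Num.Theory.
Local Open Scope ring_scope.

Section MaxPlus.
Variable R : realFieldType.

Definition S := option R.

Definition splus (x y : S) : S :=
  match x, y with
  | None, _ => y
  | _, None => x
  | Some a, Some b => Some (Num.max a b)
  end.

Definition stimes (x y : S) : S :=
  match x, y with
  | Some a, Some b => Some (a + b)
  | _, _ => None
  end.

Definition sle (x y : S) : Prop :=
  match x, y with
  | None, _ => True
  | Some _, None => False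
  | Some a, Some b => a <= b
  end.

(* ordinary real subtraction x - y (= y^{-1} x in the semifield);
   -oo if either argument is -oo (only used where both are regular/units) *)
Definition ssub (x y : S) : S :=
  match x, y with
  | Some a, Some b => Some (a - b)
  | _, _ => None
  end.

Definition smulmx m n p (A : 'M[S]_(m, n)) (C : 'M[S]_(n, p)) : 'M[S]_(m, p) :=
  \matrix_(i, j) \big[splus/None]_(k < n) stimes (A i k) (C k j).

(* epsilon-determinant with identity epsilon-function *)
Definition sdet n (A : 'M[S]_n) : S :=
  \big[splus/None]_(s : 'S_n) \big[stimes/Some 0]_(i < n) A i (s i).

Definition sadj n (A : 'M[S]_n) : 'M[S]_n :=
  \matrix_(i, j) sdet (row' j (col' i A)).

(* pseudo-inverse A^- : a^-_ij = adj(A)_ij - det(A) (meaningful when det A <> -oo) *)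
Definition spinv n (A : 'M[S]_n) : 'M[S]_n :=
  \matrix_(i, j) ssub (sadj A i j) (sdet A).

Definition sregular n (b : 'cV[S]_n) : Prop := forall i, b i 0 <> None.

Definition svle n (X Y : 'cV[S]_n) : Prop := forall i, sle (X i 0) (Y i 0).

Definition replace_col n (A : 'M[S]_n) (j : 'I_n) (b : 'cV[S]_n) : 'M[S]_n :=
  \matrix_(i, k) if k == j then b i 0 else A i k.

Definition is_max_solution n (A : 'M[S]_n) (b : 'cV[S]_n) (X : 'cV[S]_n) : Prop :=
  smulmx A X = b /\ forall Y : 'cV[S]_n, smulmx A Y = b -> svle Y X.

End MaxPlus.

(* Write X for the candidate (d_j - d)_j.  Expanding d_j along its j-th
   column and exchanging the two maxima gives
   (A X)_i = max_k (det A^{k<-i} + b_k - d), where A^{k<-i} is A with its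
   k-th row replaced by its i-th row, while Laplace expansion along row k gives
   (A A^-)_ik = det A^{k<-i} - d.  The term k = i equals b_i, so A X >= b
   always, and A X <= b is exactly the condition (A A^-)_ik <= b_i - b_k.
   Maximality holds regardless of the condition: if the permutation s attains
   d and k = s^-1(j), then d = a_kj + P and d_j >= b_k + P for the product P of
   the other entries a_l(s l), while every solution Y has a_kj + Y_j <= b_k. *)
From HB Require Import structures.
From mathcomp Require Import all_boot all_order all_algebra all_fingroup.
From mathcomp Require Import lra.
Set Implicit Arguments. Unset Strict Implicit. Unset Printing Implicit Defensive.
Import Order.TTheory GRing.Theory Num.Theory.
Local Open Scope ring_scope.

Section SemiringLaws.
Variable R : realFieldType.

Lemma splusA : associative (@splus R).
Proof. by case=> [a|] [b|] [c|] //=; rewrite maxA. Qed.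
Lemma splusC : commutative (@splus R).
Proof. by case=> [a|] [b|] //=; rewrite maxC. Qed.
Lemma splus0 : left_id None (@splus R).
Proof. by case. Qed.
Lemma stimesA : associative (@stimes R).
Proof. by case=> [a|] [b|] [c|] //=; rewrite addrA. Qed.
Lemma stimesC : commutative (@stimes R).
Proof. by case=> [a|] [b|] //=; rewrite addrC. Qed.
Lemma stimes1 : left_id (Some 0) (@stimes R).
Proof. by case=> [a|] //=; rewrite add0r. Qed.
Lemma stimes0l : left_zero None (@stimes R).
Proof. by []. Qed.
Lemma stimes0r : right_zero None (@stimes R).
Proof. by case. Qed.
Lemma stimesDl : left_distributive (@stimes R) (@splus R).
Proof. by case=> [a|] [b|] [c|] //=; rewrite addr_maxl. Qed.
Lemma stimesDr : right_distributive (@stimes R) (@splus R).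
Proof. by case=> [a|] [b|] [c|] //=; rewrite addr_maxr. Qed.

End SemiringLaws.

HB.instance Definition _ (R : realFieldType) :=
  Monoid.isComLaw.Build (S R) None (@splus R) (@splusA R) (@splusC R) (@splus0 R).
HB.instance Definition _ (R : realFieldType) :=
  Monoid.isComLaw.Build (S R) (Some 0) (@stimes R) (@stimesA R) (@stimesC R) (@stimes1 R).
HB.instance Definition _ (R : realFieldType) :=
  Monoid.isMulLaw.Build (S R) None (@stimes R) (@stimes0l R) (@stimes0r R).
HB.instance Definition _ (R : realFieldType) :=
  Monoid.isAddLaw.Build (S R) (@stimes R) (@splus R) (@stimesDl R) (@stimesDr R).

Section MaxPlus.
Variable R : realFieldType.
Local Notation S := (S R).
Local Notation "\smax_ i F" := (\big[@splus R/None]_i F)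
  (at level 41, F at level 41, i at level 0).
Local Notation "\sprod_ ( i | P ) F" := (\big[@stimes R/Some 0]_(i | P) F)
  (at level 36, F at level 36, i at level 50).

Lemma sle_refl (x : S) : sle x x.
Proof. by case: x => //= x. Qed.

Lemma sle_trans (x y z : S) : sle x y -> sle y z -> sle x z.
Proof. by case: x => [x|] //; case: y => [y|] //; case: z => [z|] //= ? ?; lra. Qed.

Lemma sle_anti (x y : S) : sle x y -> sle y x -> x = y.
Proof. by case: x => [x|]; case: y => [y|] //= ? ?; congr Some; lra. Qed.

Lemma sle_splusl (x y : S) : sle x (splus x y).
Proof. by case: x => [x|] //; case: y => [y|] //=; rewrite ?le_max ?lexx. Qed.

Lemma splus_sle (x y z : S) : sle x z -> sle y z -> sle (splus x y) z.
Proof.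
by case: x => [x|]; case: y => [y|] //=; case: z => [z|] //= ? ?; rewrite ge_max; apply/andP.
Qed.

Lemma sle_bigsplus (I : finType) (F : I -> S) i : sle (F i) (\smax_j F j).
Proof. by rewrite (bigD1 i) //=; apply: sle_splusl. Qed.

Lemma bigsplus_sle (I : finType) (F : I -> S) z :
  (forall i, sle (F i) z) -> sle (\smax_j F j) z.
Proof. by move=> Fz; apply: (big_ind (fun x => sle x z)) => // x y; apply: splus_sle. Qed.

Lemma bigsplus_attained (I : finType) (F : I -> S) :
  \smax_j F j <> None -> exists i, \smax_j F j = F i.
Proof.
suff [->|//] : \smax_j F j = None \/ exists i, \smax_j F j = F i by [].
apply: (big_ind (fun x => x = None \/ exists i, x = F i)); [by left| |by right; exists i].
move=> _ _ [->|[i ->]] [->|[k ->]]; [by left|by right; exists k| |].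
  by right; exists i; case: (F i).
case Fi: (F i) => [a|]; case Fk: (F k) => [c|] /=; [|by right; exists i|by right; exists k|by left].
by rewrite /Num.max; case: ifP; right; [exists k|exists i].
Qed.

Lemma ssubE (x d : S) : ssub x d = stimes x (omap -%R d).
Proof. by case: x; case: d. Qed.

Lemma ssub_bigsplus (I : finType) (F : I -> S) d :
  ssub (\smax_i F i) d = \smax_i ssub (F i) d.
Proof. by rewrite ssubE big_distrl; apply: eq_bigr => i _; rewrite ssubE. Qed.

Definition replace_row n (A : 'M[S]_n) (k : 'I_n) (r : 'rV[S]_n) : 'M[S]_n :=
  \matrix_(l, m) if l == k then r 0 m else A l m.

Lemma replace_row_id n (A : 'M[S]_n) i : replace_row A i (row i A) = A.
Proof. by apply/matrixP => l m; rewrite !mxE; case: eqP => // ->. Qed.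

Lemma sdet_expand_row n (M : 'M[S]_n) (j : 'I_n) :
  sdet M = \smax_k stimes (M j k) (sdet (row' j (col' k M))).
Proof.
rewrite /sdet (partition_big (fun s : 'S_n => s j) predT) //=.
apply: eq_bigr => k _.
case: n M j k => [|n] M i0 j0; first by case: i0.
rewrite (reindex (lift_perm i0 j0)); last first.
  pose ulsf i (s : 'S_n.+1) k := odflt k (unlift (s i) (s (lift i k))).
  have ulsfK i (s : 'S_n.+1) k : lift (s i) (ulsf i s k) = s (lift i k).
    rewrite /ulsf; have := neq_lift i k.
    by rewrite -(can_eq (permK s)) => /unlift_some[] ? ? ->.
  have inj_ulsf : injective (ulsf i0 _).
    move=> s; apply: can_inj (ulsf (s i0) s^-1%g) _ => k'.
    by rewrite {1}/ulsf ulsfK !permK liftK.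
  exists (fun s => perm (inj_ulsf s)) => [s _ | s].
    by apply/permP => k'; rewrite permE /ulsf lift_perm_lift lift_perm_id liftK.
  move/(s _ =P _) => si0; apply/permP => k.
  case: (unliftP i0 k) => [k'|] ->; rewrite ?lift_perm_id //.
  by rewrite lift_perm_lift -si0 permE ulsfK.
rewrite big_distrr /=.
apply: eq_big => [s | s _]; first by rewrite lift_perm_id eqxx.
rewrite (bigD1_ord i0) //= lift_perm_id; congr stimes.
by apply: eq_bigr => l _; rewrite !mxE lift_perm_lift.
Qed.

Lemma smulmx_spinv n (A : 'M[S]_n) i j :
  smulmx A (spinv A) i j = ssub (sdet (replace_row A j (row i A))) (sdet A).
Proof.
rewrite (sdet_expand_row _ j) ssub_bigsplus !mxE.
apply: eq_bigr => k _; rewrite !mxE eqxx !ssubE stimesA.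
congr (stimes (stimes _ (sdet _)) _).
by apply/matrixP => l m; rewrite !mxE eq_sym (negbTE (neq_lift _ _)).
Qed.

Lemma bigsplus_sdet_replace_col n (A : 'M[S]_n) (b : 'cV[S]_n) i :
  \smax_j stimes (A i j) (sdet (replace_col A j b))
  = \smax_k stimes (sdet (replace_row A k (row i A))) (b k 0).
Proof.
rewrite /sdet.
under eq_bigr do rewrite big_distrr.
under [RHS]eq_bigr do rewrite big_distrl.
rewrite exchange_big [RHS]exchange_big /=.
apply: eq_bigr => s _.
rewrite (reindex_inj (@perm_inj _ s)) /=.
apply: eq_bigr => k _.
rewrite (bigD1 k) // [in RHS](bigD1 k) //= !mxE !eqxx.
have -> : \sprod_(l | l != k) replace_col A (s k) b l (s l)
        = \sprod_(l | l != k) replace_row A k (row i A) l (s l).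
  apply: eq_bigr => l lk; rewrite !mxE (negbTE lk).
  by rewrite (inj_eq (@perm_inj _ s)) (negbTE lk).
by rewrite -!stimesA [stimes (b k 0) _]stimesC.
Qed.

Section CramerSolution.
Variables (n : nat) (A : 'M[S]_n) (b : 'cV[S]_n).
Hypothesis b_regular : sregular b.
Hypothesis det_finite : sdet A <> None.

Let X := \col_(j < n) ssub (sdet (replace_col A j b)) (sdet A).

Lemma smulmx_cramer i :
  smulmx A X i 0 = \smax_k ssub (stimes (sdet (replace_row A k (row i A))) (b k 0)) (sdet A).
Proof.
rewrite -ssub_bigsplus -bigsplus_sdet_replace_col ssub_bigsplus !mxE.
by apply: eq_bigr => j _; rewrite !mxE !ssubE stimesA.
Qed.

Lemma sle_smulmx_cramer i : sle (b i 0) (smulmx A X i 0).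
Proof.
rewrite smulmx_cramer; apply: sle_trans (sle_bigsplus _ i).
rewrite replace_row_id; case: (sdet A) det_finite => [d|] // _.
by case: (b i 0) => //= x; lra.
Qed.

Lemma smulmx_cramer_sle_iff i :
  sle (smulmx A X i 0) (b i 0) <->
  forall k, sle (smulmx A (spinv A) i k) (ssub (b i 0) (b k 0)).
Proof.
have term_iff k :
    sle (ssub (stimes (sdet (replace_row A k (row i A))) (b k 0)) (sdet A)) (b i 0) <->
    sle (smulmx A (spinv A) i k) (ssub (b i 0) (b k 0)).
  rewrite smulmx_spinv; case: (sdet A) det_finite => [d|] // _.
  have := @b_regular k; have := @b_regular i.
  case: (b i 0) => [bi|] // _; case: (b k 0) => [bk|] // _.
  by case: (sdet _) => [v|] //=; split => ?; lra.
rewrite smulmx_cramer; split => [le_bi k | le_bi].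
  by apply/term_iff; apply: sle_trans le_bi; apply: sle_bigsplus.
by apply: bigsplus_sle => k; apply/term_iff.
Qed.

Lemma cramer_ge_solution (Y : 'cV[S]_n) : smulmx A Y = b -> svle Y X.
Proof.
move=> AYb j; rewrite mxE.
have [s det_s] := bigsplus_attained det_finite.
set k := (s^-1)%g j; have skj : s k = j by rewrite permKV.
set P := \sprod_(l | l != k) A l (s l).
have det_split : sdet A = stimes (A k j) P by rewrite /sdet det_s (bigD1 k) // skj.
have detj_ge : sle (stimes (b k 0) P) (sdet (replace_col A j b)).
  apply: sle_trans (sle_bigsplus _ s); rewrite (bigD1 k) //= mxE skj eqxx.
  rewrite (eq_bigr (fun l => A l (s l))); first exact: sle_refl.
  by move=> l lk; rewrite mxE -skj (inj_eq (@perm_inj _ s)) (negbTE lk).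
have AY_le : sle (stimes (A k j) (Y j 0)) (b k 0).
  by rewrite -AYb mxE; apply: (sle_bigsplus (fun j => stimes (A k j) (Y j 0))).
move: detj_ge AY_le; have := det_finite; rewrite {}det_split.
case: (A k j) => [a|] //; case: P => [p|] // _.
case: (sdet (replace_col A j b)) => [e|]; case: (b k 0) => [c|];
  case: (Y j 0) => [y|] //= ? ?; lra.
Qed.

End CramerSolution.

End MaxPlus.

Theorem theorem4p8 (R : realFieldType) (n : nat) (A : 'M[S R]_n) (b : 'cV[S R]_n) :
  sregular b ->
  sdet A <> None ->
  is_max_solution A b
    (\col_(j < n) ssub (sdet (replace_col A j b)) (sdet A))
  <->
  (forall i j : 'I_n, sle (smulmx A (spinv A) i j) (ssub (b i 0) (b j 0))).
Proof.
move=> b_regular det_finite; split.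
  move=> [AXb _] i; apply/(smulmx_cramer_sle_iff b_regular det_finite).
  by rewrite AXb; apply: sle_refl.
move=> cond; split; last exact: cramer_ge_solution.
apply/matrixP => i j; rewrite (ord1 j); apply: sle_anti.
  exact/(smulmx_cramer_sle_iff b_regular det_finite).
exact: sle_smulmx_cramer.
Qed.
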